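(* Let $\rho_-\in[0,2]$ and define the measure $\mathrm{d}\rho=\rho_-\,\mathrm{d}x\llcorner[0,1]+(2-\rho_-)\,\mathrm{d}x\llcorner[1,2]$ on $[0,2]$. Let $T_{\rho_-}:[0,2]\to[0,2]$ be given, for $\rho_-\in(0,2)$, by \[T_{\rho_-}(x)=\begin{cases}\dfrac{x}{\rho_-} & x\le\rho_-,\\[2mm] 2-\dfrac{2-x}{2-\rho_-} & x>\rho_-,\end{cases}\] and by $T_0(0)=1$, $T_0(x)=1+\frac x2$ for $x>0$, and $T_2(x)=\frac x2$ for $x\le 2$. Then $\rho$ is the push-forward of Lebesgue measure on $[0,2]$ under $T_{\rho_-}$, i.e. $\mathrm{d}\rho=(T_{\rho_-})_\#\mathrm{d}x$, and \[\int_{[0,2]}(T_{\rho_-}(x)-x)^2\,\mathrm{d}x\lesssim(\rho_--1)^2,\] \[\int_{[0,2]}\Big(\tfrac12(T_{\rho_-}(x)-x)+\tfrac12(T_{2-\rho_-}(x)-x)\Big)^2\,\mathrm{d}x\lesssim(\rho_--1)^4.\]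
   Context: $A\lesssim B$ means $A\le CB$ for a finite universal constant $C$ (independent of $\rho_-$). $\mathrm{d}x\llcorner[a,b]$ denotes Lebesgue measure restricted to $[a,b]$, and $T_\#\mu(A)=\mu(T^{-1}(A))$ for Borel $A$. *)

From HB Require Import structures.
From mathcomp Require Import all_boot all_order all_algebra.
From mathcomp Require Import all_classical all_reals all_analysis.
Set Implicit Arguments. Unset Strict Implicit. Unset Printing Implicit Defensive.
Import Order.TTheory GRing.Theory Num.Theory.
Local Open Scope classical_set_scope.
Local Open Scope ring_scope.

(* The transport map T_{rho_-} : [0,2] -> [0,2] (defined on all of R;
   only its values on [0,2] matter). *)
Definition Tmap {R : realType} (rm : R) (x : R) : R :=
  if rm == 0 then (if x == 0 then 1 else 1 + x / 2)
  else if rm == 2 then x / 2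
  else if x <= rm then x / rm else 2 - (2 - x) / (2 - rm).

Definition rho_meas {R : realType} (rm : R) (A : set R) : \bar R :=
  let I01 : set R := `[(0:R), 1]%classic in
  let I12 : set R := `[(1:R), 2]%classic in
  let c1 : \bar R := rm%:E in
  let c2 : \bar R := (2 - rm)%:E in
  (c1 * (@lebesgue_measure R) (A `&` I01) + c2 * (@lebesgue_measure R) (A `&` I12))%E.

Definition pushforward_leb02 {R : realType} (T : R -> R) (A : set R) : \bar R :=
  (@lebesgue_measure R) (`[(0:R), 2]%classic `&` T @^-1` A).

From HB Require Import structures.
From mathcomp Require Import all_boot all_order all_algebra.
From mathcomp Require Import all_classical all_reals all_analysis.
From mathcomp Require Import measurable_realfun ring lra.
Import Order.TTheory GRing.Theory Num.Theory.
Local Open Scope classical_set_scope.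
Local Open Scope ring_scope.

(* On [0, rho_-] and on ]rho_-, 2] the map T_{rho_-} is affine with slopes
   1/rho_- and 1/(2 - rho_-), so the preimage of A splits into two affine
   preimages of A ∩ [0,1] and A ∩ ]1,2], of Lebesgue measures rho_- |A ∩ [0,1]|
   and (2 - rho_-) |A ∩ ]1,2]|; the endpoint 1 and, for rho_- = 0, the point 0
   are null.  For the estimates, T_{rho_-}(x) - x = w(x) (1 - rho_-) with a
   weight w(x) in [0,1], and the weights of T_{rho_-} and T_{2 - rho_-} differ
   by at most 2 |rho_- - 1|, so the average displacement is O((rho_- - 1)^2)
   pointwise; integrating over [0,2] costs a factor 2. *)

Section ge0_integral_bound.
Local Open Scope ereal_scope.
Context d (T : measurableType d) (R : realType).
Variable mu : {measure set T -> \bar R}.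

Lemma ge0_integral_le_bound (D : set T) (f : T -> \bar R) (M : R) :
  measurable D -> (0 <= M)%R -> (forall x, D x -> 0 <= f x) ->
  (forall x, D x -> f x <= M%:E) ->
  \int[mu]_(x in D) f x <= M%:E * mu D.
Proof.
move=> mD M0 f0 fM; rewrite -integral_cst // !ge0_integralE //=.
apply: ereal_sup_le => _ [h hf <-]; exists h => //= x.
apply: le_trans (hf x) _; rewrite /patch; case: ifP => // /[!inE] Dx.
exact: fM.
Qed.

End ge0_integral_bound.

Section lebesgue_measure_affine.
Context {R : realType}.
Local Notation leb := (@lebesgue_measure R).

Lemma measurable_fun_affine (c b : R) :
  measurable_fun (T:=measurableTypeR R) (U:=measurableTypeR R) setT
    (fun x => (x - b) / c).
Proof. by apply: measurable_funM => //; exact: measurable_funB. Qed.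

Lemma measurable_affine_preimage (c b : R) (B : set R) : measurable B ->
  measurable ((fun x => (x - b) / c) @^-1` B).
Proof.
by move=> mB; rewrite -[X in measurable X]setTI; exact: measurable_fun_affine.
Qed.

Lemma lebesgue_measure_affine_preimage (c b : R) (A : set R) :
  0 < c -> measurable A ->
  leb ((fun x => (x - b) / c) @^-1` A) = (c%:E * leb A)%E.
Proof.
move=> c0 mA.
pose P := measure_function_pushforward__canonical__measure_function_Measure
  leb (measurable_fun_affine c b).
have ic0 : 0 <= c^-1 by rewrite invr_ge0 ltW.
pose r : {nonneg R} := NngNum ic0.
suff -> : leb A = mscale r P A.
  by rewrite /mscale /= muleA -EFinM mulfV ?gt_eqF // mul1e.
apply: (@lebesgue_measure_unique R (mscale r P)) => // X.
case/ocitvP=> [->|[[x1 x2] /= x12 ->]]; first by rewrite measure0.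
have -> : mscale r P `]x1, x2] =
    ((c^-1)%:E * leb ((fun x => ((x - b) / c)%R) @^-1` `]x1, x2]))%E by [].
have -> : (fun x => (x - b) / c) @^-1` `]x1, x2]%classic
          = `](c * x1 + b), (c * x2 + b)]%classic.
  apply/seteqP; split => x /=; rewrite !in_itv /= ltr_pdivlMr // ler_pdivrMr //;
  by move=> /andP[h1 h2]; apply/andP; split; lra.
rewrite !lebesgue_measure_itv /= !lte_fin x12.
rewrite ltrD2r ltr_pM2l // x12 -!EFinD -EFinM; congr (_%:E); field; lra.
Qed.

Lemma lebesgue_measureU_subset1 (Y Z : set R) (p : R) :
  measurable Y -> Z `<=` [set p] -> leb (Y `|` Z) = leb Y.
Proof.
move=> mY Zp; have [Zp'|nZp] := pselect (Z p).
  have -> : Z = [set p] by apply/seteqP; split => // x ->.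
  by apply: measureU0 => //; exact: lebesgue_measure_set1.
have -> : Z = set0 by apply/seteqP; split => // x /[dup] /Zp -> /nZp.
by rewrite setU0.
Qed.

Lemma lebesgue_measureI_itvcc_oc (A : set R) (a b : R) :
  measurable A -> a <= b -> leb (A `&` `[a, b]) = leb (A `&` `]a, b]).
Proof.
move=> mA ab; rewrite -(@setU1itv _ _ (BRight b) a false) ?bnd_simp //.
rewrite setIUr setUC (@lebesgue_measureU_subset1 _ _ a) //.
exact: measurableI.
Qed.

End lebesgue_measure_affine.

Section Tmap_pushforward.
Context {R : realType}.
Local Notation leb := (@lebesgue_measure R).

Lemma Tmap_interior (rm x : R) : 0 < rm < 2 ->
  Tmap rm x = if x <= rm then x / rm else 2 - (2 - x) / (2 - rm).
Proof. by case/andP=> rm0 rm2; rewrite /Tmap gt_eqF // lt_eqF. Qed.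

Lemma preimage_Tmap_interior (rm : R) (A : set R) : 0 < rm < 2 ->
  `[0, 2] `&` Tmap rm @^-1` A =
  (fun x => (x - 0) / rm) @^-1` (A `&` `[0, 1]) `|`
  (fun x => (x - (2 * rm - 2)) / (2 - rm)) @^-1` (A `&` `]1, 2]).
Proof.
move=> rmI; have /andP[rm0 rm2] := rmI.
have s0 : 0 < 2 - rm by rewrite subr_gt0.
have right_branch x : 2 - (2 - x) / (2 - rm) = (x - (2 * rm - 2)) / (2 - rm).
  by field; rewrite gt_eqF.
have left_itv x : (0 <= x / rm <= 1) = (0 <= x <= rm).
  by rewrite ler_pdivlMr // ler_pdivrMr // mul0r mul1r.
have right_itv x : (1 < (x - (2 * rm - 2)) / (2 - rm) <= 2) = (rm < x <= 2).
  rewrite -right_branch.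
  have -> (y : R) : (1 < 2 - y <= 2) = (0 <= y < 1).
    by apply/idP/idP => /andP[? ?]; apply/andP; split; lra.
  rewrite ler_pdivlMr // ltr_pdivrMr // mul0r mul1r.
  by apply/idP/idP => /andP[? ?]; apply/andP; split; lra.
apply/seteqP; split => x /=;
  rewrite Tmap_interior // right_branch subr0 !in_itv /= left_itv right_itv.
- case=> /andP[x0 x2]; case: ifPn => [xrm Ax | /negbTE xrm Ax]; [left | right].
    by rewrite x0.
  by rewrite ltNge xrm x2.
- case=> -[Ax /andP[x0 x2]]; split; try by apply/andP; split; lra.
    by rewrite x2.
  by rewrite ifF //; apply/negbTE; rewrite -ltNge.
Qed.

Lemma preimage_Tmap0 (A : set R) :
  `[0, 2] `&` Tmap 0 @^-1` A =
  (fun x => (x - (-2)) / 2) @^-1` (A `&` `]1, 2]) `|`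
  (`[0, 2] `&` Tmap 0 @^-1` A `&` [set 0]).
Proof.
have T0 (x : R) : Tmap 0 x = if x == 0 then 1 else (x - (-2)) / 2.
  by rewrite /Tmap eqxx; case: eqP => // _; field.
apply/seteqP; split => x /=; rewrite T0 !in_itv /=.
- case=> x02 Ax; have [x0|xn0] := eqVneq x 0.
    by right; rewrite x0 eqxx in Ax.
  move: Ax x02; rewrite (negbTE xn0) => Ax /andP[x0 x2]; left.
  by split => //; apply/andP; split; lra.
- case=> [[Ax /andP[h1 h2]] | [] //].
  have xn0 : x != 0 by apply/eqP => x0; rewrite x0 in h1; lra.
  by rewrite (negbTE xn0); split => //; apply/andP; split; lra.
Qed.

Lemma preimage_Tmap2 (A : set R) :
  `[0, 2] `&` Tmap 2 @^-1` A = (fun x => (x - 0) / 2) @^-1` (A `&` `[0, 1]).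
Proof.
have T2 (x : R) : Tmap 2 x = x / 2 by rewrite /Tmap eqxx pnatr_eq0.
apply/seteqP; split => x /=; rewrite T2 subr0 !in_itv /=.
- by case=> /andP[x0 x2] Ax; split => //; apply/andP; split; lra.
- by case=> Ax /andP[x0 x2]; split => //; apply/andP; split; lra.
Qed.

Lemma rho_meas_pushforward (rm : R) (A : set R) : 0 <= rm <= 2 ->
  measurable A -> rho_meas rm A = pushforward_leb02 (Tmap rm) A.
Proof.
move=> /andP[rm0 rm2] mA; rewrite /rho_meas /pushforward_leb02 /=.
have mA01 : measurable (A `&` `[0, 1]) by exact: measurableI.
have mA12 : measurable (A `&` `]1, 2]) by exact: measurableI.
rewrite (@lebesgue_measureI_itvcc_oc _ A 1 2) ?ler1n //.
have [->|rmn0] := eqVneq rm 0.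
  rewrite preimage_Tmap0 (@lebesgue_measureU_subset1 _ _ _ 0) ?subr0;
    last 2 first.
  - exact: measurable_affine_preimage.
  - by move=> x [].
  by rewrite lebesgue_measure_affine_preimage // mul0e add0e.
have [->|rmn2] := eqVneq rm 2.
  by rewrite preimage_Tmap2 lebesgue_measure_affine_preimage // subrr mul0e adde0.
have rmp : 0 < rm by rewrite lt_def rmn0.
have s0 : 0 < 2 - rm by rewrite subr_gt0 lt_def eq_sym rmn2.
have rmI : 0 < rm < 2 by rewrite rmp -subr_gt0.
rewrite preimage_Tmap_interior // measureU; first last.
- apply/seteqP; split => x // [[_]]; rewrite /= !in_itv /= subr0.
  rewrite ler_pdivrMr // mul1r => /andP[_ xrm] [_].
  by rewrite ltr_pdivlMr // mul1r => /andP[? _]; lra.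
- exact: measurable_affine_preimage.
- exact: measurable_affine_preimage.
by congr (_ + _)%E; apply/esym; apply: lebesgue_measure_affine_preimage.
Qed.

End Tmap_pushforward.

Lemma sqr_scale_le {R : realFieldType} (t a : R) :
  `|t| <= 1 -> (t * a) ^+ 2 <= a ^+ 2.
Proof.
move=> t1; rewrite exprMn -[leRHS]mul1r ler_wpM2r ?sqr_ge0 //.
by rewrite -real_normK ?num_real // exprn_ile1.
Qed.

Lemma norm_divr_le1 {R : realFieldType} (n d : R) : 0 < d -> `|n| <= d ->
  `|n / d| <= 1.
Proof.
by move=> d0 nd; rewrite normrM normfV (gtr0_norm d0) ler_pdivrMr // mul1r.
Qed.

Section Tmap_bounds.
Context {R : realType}.

Definition Tmap_weight (rm x : R) : R :=
  if x <= rm then x / rm else (2 - x) / (2 - rm).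

Lemma Tmap_sub_interior (rm x : R) : 0 < rm < 2 ->
  Tmap rm x - x = Tmap_weight rm x * (1 - rm).
Proof.
move=> rmI; have /andP[rm0 rm2] := rmI.
rewrite Tmap_interior // /Tmap_weight; case: ifP => _; field.
  by rewrite gt_eqF.
by rewrite subr_eq0 eq_sym lt_eqF.
Qed.

Lemma Tmap_weight_itv (rm x : R) : 0 < rm < 2 -> 0 <= x <= 2 ->
  0 <= Tmap_weight rm x <= 1.
Proof.
move=> /andP[rm0 rm2] /andP[x0 x2]; have s0 : 0 < 2 - rm by rewrite subr_gt0.
rewrite /Tmap_weight; case: (leP x rm) => xrm.
  by rewrite ler_pdivlMr // ler_pdivrMr // mul0r mul1r x0.
by rewrite ler_pdivlMr // ler_pdivrMr // mul0r mul1r; apply/andP; split; lra.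
Qed.

Lemma sqr_Tmap_sub_le (rm x : R) : 0 <= rm <= 2 -> 0 <= x <= 2 ->
  (Tmap rm x - x) ^+ 2 <= (rm - 1) ^+ 2.
Proof.
move=> /andP[rm0 rm2] x02; have /andP[x0 x2] := x02.
have [->|rmn0] := eqVneq rm 0.
  by rewrite /Tmap eqxx; case: eqP => [->|_]; nra.
have [->|rmn2] := eqVneq rm 2; first by rewrite /Tmap eqxx pnatr_eq0 /=; nra.
have rmI : 0 < rm < 2 by rewrite !lt_def rmn0 rm0 eq_sym rmn2 rm2.
rewrite Tmap_sub_interior // -[(rm - 1) ^+ 2]sqrrN opprB; apply: sqr_scale_le.
by have /andP[w0 w1] := Tmap_weight_itv rm x rmI x02; rewrite ger0_norm.
Qed.

Lemma sqr_Tmap_weight_sub_le (rm x : R) : 0 < rm < 2 -> 0 <= x <= 2 ->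
  (Tmap_weight rm x - Tmap_weight (2 - rm) x) ^+ 2 <= (2 * (rm - 1)) ^+ 2.
Proof.
move=> /andP[rm0 rm2] /andP[x0 x2]; rewrite /Tmap_weight subKr.
have s0 : 0 < 2 - rm by rewrite subr_gt0.
case: (leP x rm) => xrm; case: (leP x (2 - rm)) => xs.
- rewrite (_ : _ - _ = - x / (rm * (2 - rm)) * (2 * (rm - 1))); last first.
    by field; rewrite !gt_eqF.
  apply/sqr_scale_le/norm_divr_le1; first by rewrite mulr_gt0.
  by rewrite normrN ger0_norm //; nra.
- rewrite (_ : _ - _ = (x - 1) / (rm * (rm - 1)) * (2 * (rm - 1))); last first.
    by field; rewrite (gt_eqF rm0) andbT subr_eq0 gt_eqF //; lra.
  apply/sqr_scale_le/norm_divr_le1; first by nra.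
  by rewrite ler_norml; apply/andP; split; nra.
- rewrite (_ : _ - _ = (x - 1) / ((2 - rm) * (1 - rm)) * (2 * (rm - 1)));
    last first.
    by field; rewrite (gt_eqF s0) andbT subr_eq0 gt_eqF //; lra.
  apply/sqr_scale_le/norm_divr_le1; first by nra.
  by rewrite ler_norml; apply/andP; split; nra.
- rewrite (_ : _ - _ = (2 - x) / (rm * (2 - rm)) * (2 * (rm - 1))); last first.
    by field; rewrite !gt_eqF.
  apply/sqr_scale_le/norm_divr_le1; first by rewrite mulr_gt0.
  by rewrite ger0_norm; nra.
Qed.

Lemma sqr_Tmap_average_le (rm x : R) : 0 <= rm <= 2 -> 0 <= x <= 2 ->
  (2^-1 * (Tmap rm x - x) + 2^-1 * (Tmap (2 - rm) x - x)) ^+ 2 <= (rm - 1) ^+ 4.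
Proof.
move=> /andP[rm0 rm2] x02; have /andP[x0 x2] := x02.
have [->|rmn0] := eqVneq rm 0.
  by rewrite subr0 /Tmap !eqxx pnatr_eq0 /=; case: eqP => [->|_]; nra.
have [->|rmn2] := eqVneq rm 2.
  by rewrite subrr /Tmap !eqxx pnatr_eq0 /=; case: eqP => [->|_]; nra.
have rmI : 0 < rm < 2 by rewrite !lt_def rmn0 rm0 eq_sym rmn2 rm2.
have smI : 0 < 2 - rm < 2.
  by rewrite subr_gt0 ltrBlDr ltrDl; case/andP: rmI => -> ->.
have := sqr_Tmap_weight_sub_le rm x rmI x02.
rewrite !Tmap_sub_interior // (_ : 1 - (2 - rm) = - (1 - rm)); last by ring.
set d := Tmap_weight rm x - Tmap_weight (2 - rm) x => hd.
rewrite (_ : _ + _ = 2^-1 * d * (1 - rm)); last by rewrite /d; ring.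
rewrite exprMn (_ : (rm - 1) ^+ 4 = (rm - 1) ^+ 2 * (rm - 1) ^+ 2); last by ring.
rewrite -[(1 - rm) ^+ 2]sqrrN opprB ler_wpM2r ?sqr_ge0 //.
by rewrite exprMn; nra.
Qed.

End Tmap_bounds.

Theorem lemma2p2 (R : realType) :
  exists C : R,
    forall rm : R, 0 <= rm <= 2 ->
      (forall A : set R, measurable A ->
         rho_meas rm A = pushforward_leb02 (Tmap rm) A)
      /\ (\int[@lebesgue_measure R]_(x in `[0%R, 2%R]%classic)
            ((Tmap rm x - x) ^+ 2)%:E <= (C * (rm - 1) ^+ 2)%:E)%E
      /\ (\int[@lebesgue_measure R]_(x in `[0%R, 2%R]%classic)
            ((2^-1 * (Tmap rm x - x) + 2^-1 * (Tmap (2 - rm) x - x)) ^+ 2)%:E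
            <= (C * (rm - 1) ^+ 4)%:E)%E.
Proof.
exists 2 => rm rm02; split; first by move=> A; exact: rho_meas_pushforward.
have integral_le (f : R -> R) (M : R) : 0 <= M ->
    (forall x, 0 <= x <= 2 -> f x <= M) -> (forall x, 0 <= f x) ->
    (\int[@lebesgue_measure R]_(x in `[0%R, 2%R]%classic) (f x)%:E
      <= (2 * M)%:E)%E.
  move=> M0 fM f0; rewrite mulrC EFinM.
  have <- : @lebesgue_measure R `[0%R, 2%R] = 2%:E.
    by rewrite lebesgue_measure_itv /= lte_fin ltr0n -EFinD subr0.
  apply: ge0_integral_le_bound => // x; rewrite /= in_itv lee_fin // => /fM.
split; apply: integral_le => [|x|x]; rewrite ?sqr_ge0 ?exprn_even_ge0 //.
- exact: sqr_Tmap_sub_le.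
- exact: sqr_Tmap_average_le.
Qed.
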